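(* Let $G$ be an $n$-vertex connected graph with chromatic number $\chi \geq 2$, and suppose that $\chi$ divides $n$. Then \[ {\rm ABC}(G) \leq n \sqrt{\frac{\chi(n-1)-n}{2\chi}}, \] with equality if and only if $G \cong T_{n,\chi}$.
   Context: All graphs are simple and undirected. For a graph $G$ and a vertex $v$, $d(v)$ denotes the degree of $v$. The atom-bond connectivity (ABC) index is ${\rm ABC}(G)=\sum_{uv\in E(G)} \sqrt{\frac{d(u)+d(v)-2}{d(u)d(v)}}$. $T_{n,l}$ denotes the complete $l$-partite graph on $n$ vertices whose part sizes $t_1,\dots,t_l$ satisfy $|t_i - t_j| \leq 1$ for all $i,j$. *)

From mathcomp Require Import all_boot all_order all_algebra.
Set Implicit Arguments.
Unset Strict Implicit.
Unset Printing Implicit Defensive.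
Import Order.TTheory GRing.Theory Num.Theory.

Definition simple_graph (T : finType) (e : rel T) : Prop :=
  symmetric e /\ irreflexive e.

Definition deg (T : finType) (e : rel T) (v : T) : nat := #|[set u | e v u]|.

Definition edges (T : finType) (e : rel T) : {set {set T}} :=
  [set E : {set T} | [exists u, exists v, e u v && (E == [set u; v])]].

Definition connected_graph (T : finType) (e : rel T) : Prop :=
  forall u v : T, fingraph.connect e u v.

Definition colorable (T : finType) (e : rel T) (k : nat) : Prop :=
  exists f : T -> 'I_k, forall u v, e u v -> f u != f v.

Definition is_chromatic_number (T : finType) (e : rel T) (chi : nat) : Prop :=
  colorable e chi /\ forall k, k < chi -> ~ colorable e k.

Local Open Scope ring_scope.

Definition ABC (R : rcfType) (T : finType) (e : rel T) : R :=
  \sum_(E in edges e)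
     Num.sqrt ((\sum_(v in E) (deg e v)%:R - 2) / (\prod_(v in E) deg e v)%:R).

(* Turán graph T_{n,l} on vertex set 'I_n: vertex i lies in part (i mod l);
   two vertices are adjacent iff they lie in different parts.  Part sizes
   then differ by at most one. *)
Definition turan_adj (n l : nat) : rel 'I_n :=
  fun i j => (i %% l)%N != (j %% l)%N.

Definition isomorphic_to_turan (T : finType) (e : rel T) (l : nat) : Prop :=
  exists f : T -> 'I_#|T|, bijective f /\
    forall u v, e u v = turan_adj l (f u) (f v).

From mathcomp Require Import all_boot all_order all_algebra.
From mathcomp Require Import ring lra zify.
Set Implicit Arguments.
Unset Strict Implicit.
Unset Printing Implicit Defensive.
Import Order.TTheory GRing.Theory Num.Theory.

(* Write s0 = n/chi and D = n - s0 for the part size and the degree of T_{n,chi},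
   and K = sqrt((D-1)/2); the bound then reads ABC(G) <= n K.  Fix a proper
   chi-colouring and let s_v be the size of the colour class of v, so that
   d(v) <= n - s_v.  For an edge uv, AM-GM and monotonicity reduce
     4 K sqrt((d(u) + d(v) - 2) / (d(u) d(v))) <= w(s_u) / d(u) + w(s_v) / d(v),
   where w(t) = 2(D-1) - s0 + s0^2/t, to the bipartite case s0 = D,
   s_v = 2D - d(v), which is a polynomial inequality with an explicit
   sum-of-squares certificate.  Summing over the edges, each vertex v contributes
   w(s_v) in total; as the sum of 1/s_v over all vertices is the number of colour
   classes, the total is at most 2n(D-1) = 4K nK.  Equality forces d(v) = D and
   s_v = s0 for every v, so G is complete chi-partite with equal parts. *)

Lemma big_set2 (R : Type) (idx : R) (op : Monoid.com_law idx) (T : finType)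
    (u v : T) (F : T -> R) :
  u != v -> \big[op/idx]_(w in [set u; v]) F w = op (F u) (F v).
Proof. by move=> uv; rewrite big_setU1 ?big_set1 // inE. Qed.

Section Graph.
Variables (T : finType) (e : rel T).

Lemma edgesP E : reflect (exists u v, e u v /\ E = [set u; v]) (E \in edges e).
Proof.
rewrite inE; apply: (iffP existsP) => [[u /existsP[v /andP[uv /eqP ->]]]|[u [v [uv ->]]]].
  by exists u, v.
by exists u; apply/existsP; exists v; rewrite uv eqxx.
Qed.

Lemma adj_neq u v : irreflexive e -> e u v -> u != v.
Proof. by move=> e_irr; apply: contraTneq => ->; rewrite e_irr. Qed.

Lemma card_edges_at w : simple_graph e -> #|[set E in edges e | w \in E]| = deg e w.
Proof.
move=> [e_sym e_irr].
have -> : [set E in edges e | w \in E] = (fun u => [set w; u]) @: [set u | e w u].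
  apply/setP => E; rewrite [X in X = _]inE.
  apply/andP/imsetP => [[]|[u]].
    move=> /edgesP[a [b [ab ->]]]; rewrite !inE => /orP[/eqP ->|/eqP ->].
      by exists b; rewrite ?inE.
    by exists a; rewrite ?inE 1?e_sym // setUC.
  rewrite inE => wu ->; split; last by rewrite !inE eqxx.
  by apply/edgesP; exists w, u.
rewrite card_in_imset // => u1 u2; rewrite !inE => wu1 wu2 /setP /(_ u1).
rewrite !inE eqxx orbT => /esym /orP[/eqP u1w|/eqP //].
by move: wu1; rewrite u1w e_irr.
Qed.

Lemma sum_edges_vertices (V : nmodType) (F : T -> V) : simple_graph e ->
  (\sum_(E in edges e) \sum_(w in E) F w = \sum_w F w *+ deg e w)%R.
Proof.
move=> e_simple; under eq_bigr => E _ do rewrite big_mkcond /=.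
rewrite exchange_big /=; apply: eq_bigr => w _.
rewrite -big_mkcondr /= -(card_edges_at w e_simple) sumr_const.
by congr (_ *+ _)%R; apply: eq_card => E; rewrite inE.
Qed.

Lemma connected_deg_gt0 v : connected_graph e -> 1 < #|T| -> 0 < deg e v.
Proof.
move=> e_conn T_gt1.
have [w] : exists w, w \in [set~ v].
  by apply/set0Pn; rewrite -card_gt0 cardsC1; lia.
rewrite !inE => vw.
have /connectP[[|u p] /= path_vw last_w] := e_conn v w.
  by rewrite last_w eqxx in vw.
by case/andP: path_vw => vu _; rewrite /deg card_gt0; apply/set0Pn; exists u; rewrite inE.
Qed.

Lemma card_gt1_of_not_colorable1 : irreflexive e -> ~ colorable e 1 -> 1 < #|T|.
Proof.
move=> e_irr not_col; rewrite ltnNge; apply/negP => /card_le1_eqP T_le1.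
apply: not_col; exists (fun _ => ord0) => u v uv.
by move: uv; rewrite (T_le1 u v) ?inE // e_irr.
Qed.

Section Colouring.
Variables (I : finType) (f : T -> I).
Hypothesis f_proper : forall u v, e u v -> f u != f v.

Local Notation colour_class v := [set w | f w == f v].

Lemma neighbours_sub_colour_classC v : [set u | e v u] \subset ~: colour_class v.
Proof. by apply/subsetP => u; rewrite !inE eq_sym => /f_proper. Qed.

Lemma deg_add_card_colour_class v : deg e v + #|colour_class v| <= #|T|.
Proof.
rewrite -(cardsC (colour_class v)) addnC leq_add2l.
by rewrite subset_leq_card // neighbours_sub_colour_classC.
Qed.

Lemma adj_of_deg_add_card_colour_class v :
  deg e v + #|colour_class v| = #|T| -> forall u, e v u = (f u != f v).
Proof.
move=> card_eq u.
have : [set u | e v u] = ~: colour_class v.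
  apply/eqP; rewrite eqEcard neighbours_sub_colour_classC /=.
  by have := cardsC (colour_class v); rewrite /deg in card_eq; lia.
by move/setP/(_ u); rewrite !inE.
Qed.

End Colouring.

End Graph.

Section Fibres.
Variables (T I : finType) (f : T -> I).
Local Open Scope ring_scope.

Lemma sum_inv_card_fibre_le (R : numFieldType) :
  \sum_v (#|[set w | f w == f v]|%:R : R)^-1 <= #|I|%:R.
Proof.
rewrite (partition_big f predT) //= -sum1_card natr_sum ler_sum // => i _.
rewrite (eq_bigr (fun=> (#|[set w | f w == i]|%:R)^-1)) => [|v /eqP -> //].
rewrite sumr_const (_ : #|_| = #|[set w | f w == i]|); last by apply: eq_card => v; rewrite inE.
have [->|class_gt0] := posnP #|[set w | f w == i]|; first by rewrite mulr0n.
by rewrite -[_^-1 *+ _]mulr_natr mulVf // pnatr_eq0 -lt0n.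
Qed.

End Fibres.

Section Turan.
Variables n k : nat.
Hypotheses (k_gt0 : 0 < k) (k_dvd : k %| n).

Lemma card_turan_part r : r < k -> #|[set j : 'I_n | j %% k == r]| = n %/ k.
Proof.
move=> r_lt; rewrite -[RHS]card_ord -cardsT.
have quot_lt (j : 'I_n) : j %/ k < n %/ k by rewrite ltn_divLR // divnK.
rewrite -(card_in_imset (f := fun j => Ordinal (quot_lt j))) => [|j1 j2].
  congr #|pred_of_set _|; apply/setP => q; rewrite inE; apply/imsetP.
  have q_lt : q * k + r < n.
    by have := ltn_ord q; have := divnK k_dvd; nia.
  exists (Ordinal q_lt); first by rewrite inE /= modnMDl modn_small.
  by apply: val_inj; rewrite /= divnMDl // (divn_small r_lt) addn0.
rewrite !inE => /eqP j1_mod /eqP j2_mod /(congr1 val) /= quot_eq.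
by apply: val_inj; rewrite /= (divn_eq j1 k) (divn_eq j2 k) quot_eq j1_mod j2_mod.
Qed.

Lemma deg_turan_adj (i : 'I_n) : deg (turan_adj k) i = n - n %/ k.
Proof.
rewrite /deg -(card_turan_part (ltn_pmod i k_gt0)) -[n in n - _]card_ord.
rewrite -(cardsC [set j : 'I_n | j %% k == i %% k]) addKn.
by apply: eq_card => j; rewrite !inE eq_sym.
Qed.

End Turan.

Lemma isomorphic_to_turan_deg (T : finType) (e : rel T) k v :
  0 < k -> k %| #|T| -> isomorphic_to_turan e k -> deg e v = #|T| - #|T| %/ k.
Proof.
move=> k_gt0 k_dvd [h [h_bij h_adj]].
rewrite -(deg_turan_adj k_gt0 k_dvd (h v)) /deg -(on_card_preimset (onW_bij _ h_bij)).
by apply: eq_card => u; rewrite !inE h_adj.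
Qed.

Lemma isomorphic_to_turan_of_parts (T : finType) (e : rel T) k (f : T -> 'I_k) :
  k %| #|T| -> (forall v, #|[set w | f w == f v]| = #|T| %/ k) ->
  (forall u v, e u v = (f u != f v)) -> isomorphic_to_turan e k.
Proof.
move=> k_dvd part_card adj.
pose idx v := index v (enum [set w | f w == f v]).
have idx_lt v : idx v < #|T| %/ k by rewrite -(part_card v) cardE index_mem mem_enum inE.
have h_lt v : idx v * k + f v < #|T|.
  by have := idx_lt v; have := ltn_ord (f v); have := divnK k_dvd; nia.
pose h v : 'I_#|T| := Ordinal (h_lt v).
have h_mod v : h v %% k = f v by rewrite modnMDl modn_small.
have h_inj : injective h.
  move=> u v huv.
  have fuv : f u = f v by apply: val_inj; rewrite /= -!h_mod huv.
  have /eqP : idx u * k + f u = idx v * k + f v by move/(congr1 val): huv.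
  have k_gt0 : 0 < k := leq_ltn_trans (leq0n _) (ltn_ord (f u)).
  rewrite fuv eqn_add2r eqn_pmul2r // /idx fuv => /eqP idx_eq.
  by apply: (index_inj u _ _ idx_eq); rewrite mem_enum inE ?fuv.
exists h; split; first by apply: inj_card_bij => //; rewrite card_ord.
by move=> u v; rewrite adj /turan_adj !h_mod.
Qed.

Local Open Scope ring_scope.

Section Weights.
Variable R : realFieldType.
Implicit Types D a b x y : R.

Definition colour_weight (D s0 s : R) : R := 2 * (D - 1) - s0 + s0 ^+ 2 / s.

Definition bipartite_gap D a b : R :=
  D ^+ 3 * (a ^+ 2 + b ^+ 2) + 2 * D ^+ 2 * a * b - 2 * D * a * b * (a + b)
  + 2 * (1 - D) * a ^+ 2 * b ^+ 2.

Lemma bipartite_gap_ge D a b :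
  1 - D <= a -> a <= D - 1 -> 1 - D <= b -> b <= D - 1 ->
  (D - 1) * (3 * D - 1) / 2 * (a ^+ 2 + b ^+ 2) <= bipartite_gap D a b.
Proof.
move=> a_ge a_le b_ge b_le.
have a2_le : a ^+ 2 <= (D - 1) ^+ 2 by nra.
have b2_le : b ^+ 2 <= (D - 1) ^+ 2 by nra.
have -> : bipartite_gap D a b =
    (D * (a + b) - a * b) ^+ 2 + (D - 1) * (3 * D - 1) / 2 * (a ^+ 2 + b ^+ 2)
    + (2 * D - 1) / 2 * ((D - 1) ^+ 2 * (a ^+ 2 + b ^+ 2) - 2 * a ^+ 2 * b ^+ 2).
  by rewrite /bipartite_gap; field.
have cross_ge0 : 0 <= (D - 1) ^+ 2 * (a ^+ 2 + b ^+ 2) - 2 * a ^+ 2 * b ^+ 2.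
  have : a ^+ 2 * b ^+ 2 <= a ^+ 2 * (D - 1) ^+ 2 by rewrite ler_wpM2l ?sqr_ge0.
  have : a ^+ 2 * b ^+ 2 <= (D - 1) ^+ 2 * b ^+ 2 by rewrite ler_wpM2r ?sqr_ge0.
  lra.
have : 0 <= (2 * D - 1) / 2 * ((D - 1) ^+ 2 * (a ^+ 2 + b ^+ 2) - 2 * a ^+ 2 * b ^+ 2).
  by rewrite mulr_ge0 //; lra.
have := sqr_ge0 (D * (a + b) - a * b); lra.
Qed.

Lemma bipartite_edge_gap D x y :
  0 < D -> 1 <= x -> x < 2 * D -> 1 <= y -> y < 2 * D ->
  colour_weight D D (2 * D - x) / x + colour_weight D D (2 * D - y) / y
    - (2 * (D - 1) / D + D * ((x + y - 2) / (x * y)))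
  = bipartite_gap D (x - D) (y - D) / (D * x * y * (2 * D - x) * (2 * D - y)).
Proof.
move=> D_gt0 x_ge1 x_lt y_ge1 y_lt.
rewrite /colour_weight /bipartite_gap; field.
by apply/and5P; split; apply/eqP; lra.
Qed.

Let edge_den_gt0 D x y :
  1 <= D -> 1 <= x -> x <= 2 * D - 1 -> 1 <= y -> y <= 2 * D - 1 ->
  0 < D * x * y * (2 * D - x) * (2 * D - y).
Proof.
move=> D_ge1 x_ge1 x_le y_ge1 y_le.
have [D_gt0 x_gt0 y_gt0] : [/\ 0 < D, 0 < x & 0 < y] by split; lra.
have [Dx_gt0 Dy_gt0] : 0 < 2 * D - x /\ 0 < 2 * D - y by split; lra.
by rewrite !mulr_gt0.
Qed.

Lemma bipartite_edge_le D x y :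
  1 <= D -> 1 <= x -> x <= 2 * D - 1 -> 1 <= y -> y <= 2 * D - 1 ->
  2 * (D - 1) / D + D * ((x + y - 2) / (x * y))
    <= colour_weight D D (2 * D - x) / x + colour_weight D D (2 * D - y) / y.
Proof.
move=> D_ge1 x_ge1 x_le y_ge1 y_le.
rewrite -subr_ge0 bipartite_edge_gap; try lra.
apply: divr_ge0; last exact/ltW/edge_den_gt0.
have coef_ge0 : 0 <= (D - 1) * (3 * D - 1) / 2 by nra.
apply: le_trans (bipartite_gap_ge _ _ _ _); try lra.
by rewrite mulr_ge0 // addr_ge0 ?sqr_ge0.
Qed.

Lemma bipartite_edge_eq D x y :
  1 < D -> 1 <= x -> x <= 2 * D - 1 -> 1 <= y -> y <= 2 * D - 1 ->
  2 * (D - 1) / D + D * ((x + y - 2) / (x * y))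
    = colour_weight D D (2 * D - x) / x + colour_weight D D (2 * D - y) / y ->
  x = D /\ y = D.
Proof.
move=> D_gt1 x_ge1 x_le y_ge1 y_le /eqP; rewrite eq_sym -subr_eq0.
rewrite bipartite_edge_gap; try lra.
have den_gt0 : 0 < D * x * y * (2 * D - x) * (2 * D - y) by apply: edge_den_gt0; lra.
rewrite mulf_eq0 invr_eq0 (gt_eqF den_gt0) orbF => /eqP gap0.
have coef_gt0 : 0 < (D - 1) * (3 * D - 1) / 2 by nra.
have : (x - D) ^+ 2 + (y - D) ^+ 2 <= 0.
  rewrite -(pmulr_rle0 _ coef_gt0) -gap0.
  by apply: bipartite_gap_ge; lra.
have := sqr_ge0 (x - D); have := sqr_ge0 (y - D) => y2_ge0 x2_ge0 sum_le0.
have /eqP : (x - D) ^+ 2 = 0 by lra.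
have /eqP : (y - D) ^+ 2 = 0 by lra.
by rewrite !sqrf_eq0 !subr_eq0 => /eqP -> /eqP ->.
Qed.

Lemma colour_weight_antitone (D s0 s s' : R) :
  0 < s -> s <= s' -> colour_weight D s0 s' <= colour_weight D s0 s.
Proof.
move=> s_gt0 s_le; rewrite lerD2l ler_wpM2l ?sqr_ge0 // lef_pV2 ?posrE //.
exact: lt_le_trans s_le.
Qed.

Lemma colour_weight_inj (D s0 : R) : s0 != 0 -> injective (colour_weight D s0).
Proof.
by move=> s0_neq0 s s' /addrI /mulfI; rewrite sqrf_eq0 => /(_ s0_neq0) /invr_inj.
Qed.

Lemma colour_weight_self (D s0 : R) : s0 != 0 -> colour_weight D s0 s0 = 2 * (D - 1).
Proof. by move=> s0_neq0; rewrite /colour_weight expr2 mulfK // subrK. Qed.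

Lemma vertex_weight_ge (D s0 x s : R) :
  s0 <= D -> 1 <= x -> 0 < s -> s <= D + s0 - x ->
  colour_weight D D (2 * D - x) / x <= colour_weight D s0 s / x.
Proof.
move=> s0_le x_ge1 s_gt0 s_le.
have x_gt0 : 0 < x by lra.
apply: (@le_trans _ _ (colour_weight D s0 (D + s0 - x) / x)); last first.
  by rewrite ler_wpM2r ?invr_ge0 ?(ltW x_gt0) ?colour_weight_antitone.
rewrite -subr_ge0.
have -> : colour_weight D s0 (D + s0 - x) / x - colour_weight D D (2 * D - x) / x
    = (x - D) ^+ 2 / x * (D - s0) / ((2 * D - x) * (D + s0 - x)).
  by rewrite /colour_weight; field; apply/and3P; split; apply/eqP; lra.
have [Dx_gt0 nx_gt0] : 0 < 2 * D - x /\ 0 < D + s0 - x by split; lra.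
apply: divr_ge0; last by rewrite ltW // mulr_gt0.
by rewrite mulr_ge0 ?divr_ge0 ?sqr_ge0 ?subr_ge0 ?(ltW x_gt0).
Qed.

End Weights.

Section EdgeBound.
Variable R : rcfType.
Implicit Types D K g x y : R.

Lemma sqrt_amgm K D g : 0 < D -> 0 <= g ->
  4 * K * Num.sqrt g <= 4 * K ^+ 2 / D + D * g.
Proof.
move=> D_gt0 g_ge0; rewrite -subr_ge0 -[in D * g](sqr_sqrtr g_ge0).
have -> : 4 * K ^+ 2 / D + D * Num.sqrt g ^+ 2 - 4 * K * Num.sqrt g
    = (2 * K - D * Num.sqrt g) ^+ 2 / D by field; rewrite gt_eqF.
by rewrite divr_ge0 ?sqr_ge0 ?ltW.
Qed.

Lemma turan_amgm D g : 1 <= D -> 0 <= g ->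
  4 * Num.sqrt ((D - 1) / 2) * Num.sqrt g <= 2 * (D - 1) / D + D * g.
Proof.
move=> D_ge1 g_ge0; have D_gt0 : 0 < D by lra.
have -> : 2 * (D - 1) = 4 * Num.sqrt ((D - 1) / 2) ^+ 2.
  by rewrite sqr_sqrtr; [field | lra].
exact: sqrt_amgm.
Qed.

Lemma edge_weight_le D (s0 s t : R) x y :
  1 <= s0 -> s0 <= D -> 1 <= s -> 1 <= t ->
  1 <= x -> x <= D + s0 - s -> 1 <= y -> y <= D + s0 - t ->
  4 * Num.sqrt ((D - 1) / 2) * Num.sqrt ((x + y - 2) / (x * y))
    <= colour_weight D s0 s / x + colour_weight D s0 t / y.
Proof.
move=> s0_ge1 s0_le s_ge1 t_ge1 x_ge1 x_le y_ge1 y_le.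
have g_ge0 : 0 <= (x + y - 2) / (x * y) by apply: divr_ge0; nra.
apply: le_trans (turan_amgm _ g_ge0) _; first lra.
apply: le_trans (bipartite_edge_le _ _ _ _ _) _; try lra.
by apply: lerD; apply: (@vertex_weight_ge R); lra.
Qed.

Lemma edge_weight_eq D (s0 s t : R) x y :
  1 <= s0 -> s0 <= D -> 1 <= s -> 1 <= t ->
  1 <= x -> x <= D + s0 - s -> 1 <= y -> y <= D + s0 - t ->
  4 * Num.sqrt ((D - 1) / 2) * Num.sqrt ((x + y - 2) / (x * y))
    = colour_weight D s0 s / x + colour_weight D s0 t / y ->
  [/\ x = D, y = D, s = s0 & t = s0].
Proof.
move=> s0_ge1 s0_le s_ge1 t_ge1 x_ge1 x_le y_ge1 y_le.
(* If D <= 1, the hypotheses already pin D, s0, x, y, s and t to 1. *)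
have [D_gt1|D_le1] := ltrP 1 D; last by split; lra.
have g_ge0 : 0 <= (x + y - 2) / (x * y) by apply: divr_ge0; nra.
have amgm := turan_amgm (ltW D_gt1) g_ge0.
have bip : 2 * (D - 1) / D + D * ((x + y - 2) / (x * y))
    <= colour_weight D D (2 * D - x) / x + colour_weight D D (2 * D - y) / y.
  by apply: (@bipartite_edge_le R); lra.
have wx : colour_weight D D (2 * D - x) / x <= colour_weight D s0 s / x.
  by apply: (@vertex_weight_ge R); lra.
have wy : colour_weight D D (2 * D - y) / y <= colour_weight D s0 t / y.
  by apply: (@vertex_weight_ge R); lra.
move=> abc_eq.
have [xD yD] : x = D /\ y = D by apply: (@bipartite_edge_eq R); lra.
subst x y.
have s0_neq0 : s0 != 0 by apply/eqP; lra.
have D_neq0 : D != 0 by apply/eqP; lra.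
have weight_D : colour_weight D D (2 * D - D) / D = colour_weight D s0 s0 / D.
  by rewrite (_ : 2 * D - D = D) ?colour_weight_self //; lra.
rewrite weight_D in bip wx wy; split => //.
  by apply: (colour_weight_inj s0_neq0); apply: (mulIf (invr_neq0 D_neq0)); lra.
by apply: (colour_weight_inj s0_neq0); apply: (mulIf (invr_neq0 D_neq0)); lra.
Qed.

End EdgeBound.

Section ABCIndex.
Variables (R : rcfType) (T : finType) (e : rel T).
Hypothesis e_simple : simple_graph e.

Definition abc_summand (E : {set T}) : R :=
  Num.sqrt ((\sum_(v in E) (deg e v)%:R - 2) / (\prod_(v in E) deg e v)%:R).

Lemma ABCE : ABC R e = \sum_(E in edges e) abc_summand E.
Proof. by []. Qed.

Lemma abc_summand_set2 u v : e u v ->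
  abc_summand [set u; v]
    = Num.sqrt (((deg e u)%:R + (deg e v)%:R - 2) / ((deg e u)%:R * (deg e v)%:R)).
Proof.
by move=> uv; rewrite /abc_summand !big_set2 ?natrM ?(adj_neq e_simple.2 uv).
Qed.

Lemma ABC_regular d : (forall v, deg e v = d) ->
  ABC R e = #|T|%:R * Num.sqrt ((d%:R - 1) / 2).
Proof.
move=> e_reg.
pose c : R := Num.sqrt ((d%:R + d%:R - 2) / (d%:R * d%:R)).
have -> : ABC R e = \sum_(E in edges e) \sum_(w in E) c / 2.
  rewrite ABCE; apply: eq_bigr => E /edgesP[u [v [uv ->]]].
  by rewrite abc_summand_set2 // !e_reg big_set2 ?(adj_neq e_simple.2 uv) //= -splitr.
rewrite sum_edges_vertices // (eq_bigr (fun=> c / 2 *+ d)) => [|w _]; last by rewrite e_reg.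
rewrite sumr_const -mulr_natl -[_ *+ #|_|]mulr_natl; congr (_ * _).
have [->|d_gt0] := posnP d; first by rewrite mul0r ler0_sqrtr //; lra.
have half_d_ge0 : 0 <= d%:R / 2 :> R by rewrite divr_ge0 ?ler0n.
rewrite mulrCA mulrC -[d%:R / 2](ger0_norm half_d_ge0) -sqrtr_sqr -sqrtrM ?sqr_ge0 //.
by congr Num.sqrt; field; rewrite pnatr_eq0 -lt0n.
Qed.

End ABCIndex.

Section TuranBound.
Variables (R : rcfType) (T : finType) (e : rel T) (k : nat) (f : T -> 'I_k).
Hypotheses (e_simple : simple_graph e) (f_proper : forall u v, e u v -> f u != f v).
Hypotheses (k_gt1 : (1 < k)%N) (k_dvd : (k %| #|T|)%N).
Hypotheses (T_gt0 : (0 < #|T|)%N) (deg_gt0 : forall v, (0 < deg e v)%N).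

Local Notation n := #|T|.
Local Notation s0 := (#|T| %/ k)%N.
Local Notation D := (#|T| - #|T| %/ k)%N.
Local Notation colour_class v := #|[set w | f w == f v]|.
Local Notation K := (Num.sqrt ((D%:R - 1) / 2) : R).

Let D_add_s0 : (D + s0)%N = n.
Proof. by rewrite subnK // leq_div. Qed.

Let vertex_bounds v :
  [/\ 1 <= (deg e v)%:R :> R, 1 <= (colour_class v)%:R :> R
    & (deg e v)%:R <= D%:R + s0%:R - (colour_class v)%:R :> R].
Proof.
rewrite !ler1n deg_gt0 card_gt0; split => //; first by apply/set0Pn; exists v; rewrite inE.
by rewrite lerBrDr -!natrD ler_nat D_add_s0 (deg_add_card_colour_class f_proper).
Qed.

Let part_bounds : 1 <= s0%:R :> R /\ s0%:R <= D%:R :> R.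
Proof.
rewrite ler1n ler_nat divn_gt0 ?(ltnW k_gt1) // (dvdn_leq T_gt0 k_dvd); split => //.
have : (s0 * 2 <= s0 * k)%N by rewrite leq_mul2l k_gt1 orbT.
by rewrite divnK // => two_s0_le; rewrite leq_subRL ?leq_div //; lia.
Qed.

Lemma edge_abc_le E : E \in edges e ->
  4 * K * abc_summand R e E
    <= \sum_(w in E) colour_weight D%:R s0%:R (colour_class w)%:R / (deg e w)%:R.
Proof.
case/edgesP => u [v [uv ->]]; rewrite abc_summand_set2 // big_set2 ?(adj_neq e_simple.2 uv) //=.
have [du_ge1 su_ge1 du_le] := vertex_bounds u; have [dv_ge1 sv_ge1 dv_le] := vertex_bounds v.
by have [s0_ge1 s0_le] := part_bounds; apply: edge_weight_le.
Qed.

Lemma edge_abc_eq E : E \in edges e ->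
  4 * K * abc_summand R e E
    = \sum_(w in E) colour_weight D%:R s0%:R (colour_class w)%:R / (deg e w)%:R ->
  forall w, w \in E -> deg e w = D /\ colour_class w = s0.
Proof.
case/edgesP => u [v [uv ->]]; rewrite abc_summand_set2 // big_set2 ?(adj_neq e_simple.2 uv) //=.
have [du_ge1 su_ge1 du_le] := vertex_bounds u; have [dv_ge1 sv_ge1 dv_le] := vertex_bounds v.
have [s0_ge1 s0_le] := part_bounds.
move=> /(edge_weight_eq s0_ge1 s0_le su_ge1 sv_ge1 du_ge1 du_le dv_ge1 dv_le).
move=> [du_eq dv_eq su_eq sv_eq] w; rewrite !inE => /orP[] /eqP ->;
  by split; apply/eqP; rewrite -(eqr_nat R) ?du_eq ?dv_eq ?su_eq ?sv_eq.
Qed.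

Lemma sum_edge_weights :
  \sum_(E in edges e) \sum_(w in E) colour_weight D%:R s0%:R (colour_class w)%:R / (deg e w)%:R
    = \sum_v colour_weight D%:R s0%:R (colour_class v)%:R :> R.
Proof.
rewrite sum_edges_vertices //; apply: eq_bigr => v _.
by rewrite -[_ *+ deg e v]mulr_natr mulfVK // pnatr_eq0 -lt0n.
Qed.

Lemma sum_colour_weight_le :
  \sum_v colour_weight D%:R s0%:R (colour_class v)%:R <= 4 * K * (n%:R * K).
Proof.
have [s0_ge1 s0_le] := part_bounds.
have K2 : K ^+ 2 = (D%:R - 1) / 2 by rewrite sqr_sqrtr //; lra.
have inv_le : s0%:R ^+ 2 * \sum_v (colour_class v)%:R^-1 <= s0%:R ^+ 2 * k%:R :> R.
  by rewrite ler_wpM2l ?sqr_ge0 // -[k in k%:R]card_ord (sum_inv_card_fibre_le f R).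
have nR : n%:R = s0%:R * k%:R :> R by rewrite -natrM divnK.
have s0k : s0%:R ^+ 2 * k%:R = s0%:R * n%:R :> R by rewrite nR; ring.
have D_add_s0R : D%:R + s0%:R = n%:R :> R by rewrite -natrD D_add_s0.
have -> : 4 * K * (n%:R * K) = 4 * n%:R * K ^+ 2 by ring.
rewrite K2 /colour_weight big_split /= sumr_const -mulr_sumr -[_ *+ #|_|]mulr_natl.
lra.
Qed.

Lemma ABC_le_turan : ABC R e <= n%:R * K.
Proof.
have [K_gt0|K_le0] := ltrP 0 K.
  rewrite -(ler_pM2l (_ : 0 < 4 * K)) ?mulr_gt0 // ABCE mulr_sumr.
  apply: le_trans sum_colour_weight_le; rewrite -sum_edge_weights.
  by apply: ler_sum => E; apply: edge_abc_le.
(* K = 0 forces D = 1, and then every vertex has degree 1. *)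
have [s0_ge1 s0_le] := part_bounds.
have D_le1 : D%:R <= 1 :> R.
  by move: K_le0; rewrite leNgt sqrtr_gt0 -leNgt; lra.
have one_regular v : deg e v = 1%N.
  have [deg_ge1 class_ge1 deg_le] := vertex_bounds v.
  by apply/eqP; rewrite -(eqr_nat R); apply/eqP; lra.
by rewrite (ABC_regular R e_simple one_regular) subrr mul0r sqrtr0 mulr0 mulr_ge0 ?sqrtr_ge0.
Qed.

Lemma deg_part_of_ABC_eq : ABC R e = n%:R * K ->
  forall v, deg e v = D /\ colour_class v = s0.
Proof.
move=> abc_eq.
pose slack (E : {set T}) :=
  \sum_(w in E) colour_weight D%:R s0%:R (colour_class w)%:R / (deg e w)%:R
  - 4 * K * abc_summand R e E.
have slack_ge0 (E : {set T}) : E \in edges e -> 0 <= slack E by rewrite subr_ge0 => /edge_abc_le.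
have slack_sum : \sum_(E in edges e) slack E = 0.
  apply/eqP; rewrite eq_le sumr_ge0 // andbT sumrB sum_edge_weights -mulr_sumr -ABCE.
  by rewrite abc_eq subr_le0 sum_colour_weight_le.
move=> v; have /card_gt0P[u] := deg_gt0 v; rewrite inE => vu.
have vu_edge : [set v; u] \in edges e by apply/edgesP; exists v, u.
apply: (edge_abc_eq vu_edge); last by rewrite !inE eqxx.
by apply/eqP; rewrite eq_sym -subr_eq0; apply/eqP/(psumr_eq0P slack_ge0 slack_sum).
Qed.

End TuranBound.

Lemma turan_coefE (R : numFieldType) n k : (0 < k)%N -> (k %| n)%N ->
  (k%:R * (n%:R - 1) - n%:R) / (2 * k%:R) = ((n - n %/ k)%N%:R - 1) / 2 :> R.
Proof.
move=> k_gt0 k_dvd; have nR : n%:R = (n %/ k)%:R * k%:R :> R by rewrite -natrM divnK.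
by rewrite natrB ?leq_div // nR; field; rewrite pnatr_eq0 -lt0n.
Qed.

Theorem corollary3 (R : rcfType) (T : finType) (e : rel T) (chi : nat) :
  simple_graph e -> connected_graph e ->
  is_chromatic_number e chi -> (2 <= chi)%N -> (chi %| #|T|)%N ->
  let n : R := (#|T|)%:R in
  ABC R e <= n * Num.sqrt ((chi%:R * (n - 1) - n) / (2 * chi%:R)) /\
  (ABC R e = n * Num.sqrt ((chi%:R * (n - 1) - n) / (2 * chi%:R))
     <-> isomorphic_to_turan e chi).
Proof.
move=> e_simple e_conn [[f f_proper] chi_min] chi_gt1 chi_dvd n.
have T_gt1 := card_gt1_of_not_colorable1 e_simple.2 (chi_min 1%N chi_gt1).
have T_gt0 := ltnW T_gt1; have chi_gt0 := ltnW chi_gt1.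
have deg_gt0 v := connected_deg_gt0 v e_conn T_gt1.
have coefE : (chi%:R * (n - 1) - n) / (2 * chi%:R) = ((#|T| - #|T| %/ chi)%N%:R - 1) / 2
  := turan_coefE R chi_gt0 chi_dvd.
rewrite coefE /n.
split; first by have := ABC_le_turan R e_simple f_proper chi_gt1 chi_dvd T_gt0 deg_gt0.
have turan_like := deg_part_of_ABC_eq e_simple f_proper chi_gt1 chi_dvd T_gt0 deg_gt0.
split => [/turan_like turan_shape|turan].
  apply: (isomorphic_to_turan_of_parts (f := f)) => // [v|u v].
    by have [] := turan_shape v.
  have [deg_u class_u] := turan_shape u.
  rewrite (adj_of_deg_add_card_colour_class f_proper) 1?eq_sym //.
  by rewrite deg_u class_u subnK // leq_div.
by rewrite (ABC_regular R e_simple (fun v => isomorphic_to_turan_deg v chi_gt0 chi_dvd turan)).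
Qed.
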